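(* Let $G_0$ be a directed multigraph on vertex set $\{0,1,\dots,n+1\}$, each edge $(p,q)$ oriented $p\to q$ with $p<q$, and suppose $(i,j),(j,k)\in E(G_0)$ for some $i<j<k$. Let $G_1$ and $G_2$ be the multigraphs on the same vertex set with edge multisets $$E(G_1)=E(G_0)\setminus\{(j,k)\}\cup\{(i,k)\},\qquad E(G_2)=E(G_0)\setminus\{(i,j)\}\cup\{(i,k)\}$$ (one copy removed, one copy added). For $r\in[n]$ let $d_r=\operatorname{indeg}_{G_0}(r)-1$, $d_r'=\operatorname{indeg}_{G_1}(r)-1$, $d_r''=\operatorname{indeg}_{G_2}(r)-1$, and set $\mathbf d=(0,d_1,\dots,d_n,-\sum_{r=1}^n d_r)$, $\mathbf d_1=(0,d'_1,\dots,d'_n,-\sum_{r=1}^n d'_r)$, $\mathbf d_2=(0,d''_1,\dots,d''_n,-\sum_{r=1}^n d''_r)$. Then $$K_{G_0}(\mathbf d)=K_{G_1}(\mathbf d_1)+K_{G_2}(\mathbf d_2).$$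
   Context: For a directed multigraph $G$ on $\{0,\dots,n+1\}$ and a vector $\mathbf a=(a_0,\dots,a_{n+1})$ with $\sum_i a_i=0$, the flow polytope $\mathcal F_G(\mathbf a)$ is the set of $f\in\mathbb R_{\ge0}^{E(G)}$ such that at each vertex $v$ the net flow (outgoing minus incoming) equals $a_v$, and $K_G(\mathbf a)$ is the number of integer points of $\mathcal F_G(\mathbf a)$. *)

From HB Require Import structures.
From mathcomp Require Import all_boot all_order all_algebra.
From mathcomp Require Import finmap.
From mathcomp Require Import boolp classical_sets cardinality.
Set Implicit Arguments. Unset Strict Implicit. Unset Printing Implicit Defensive.
Import Order.TTheory GRing.Theory Num.Theory.

Local Open Scope ring_scope.

(* A directed multigraph on the vertex set {0,...,n+1} = 'I_(n+2) is a list
   of edges (p, q), each oriented p -> q; repeated entries are parallel edges. *)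
Definition mgraph (n : nat) := seq ('I_(n.+2) * 'I_(n.+2)).

Definition flow_vec (n : nat) (G : mgraph n) := {ffun 'I_(size G) -> nat}.

Definition netflow (n : nat) (G : mgraph n) (f : flow_vec G) (v : 'I_(n.+2)) : int :=
  (\sum_(e : 'I_(size G) | (nth (v, v) G e).1 == v) (f e)%:Z)
  - (\sum_(e : 'I_(size G) | (nth (v, v) G e).2 == v) (f e)%:Z).

Definition int_flows (n : nat) (G : mgraph n) (a : 'I_(n.+2) -> int) : set (flow_vec G) :=
  [set f | forall v, netflow f v = a v].
Arguments int_flows {n} G a.

(* K_G(a) = number of integer points of F_G(a) (fset_set of a finite set is
   that set; the set is finite for the graphs considered, edges p -> q, p < q). *)
Definition K (n : nat) (G : mgraph n) (a : 'I_(n.+2) -> int) : nat :=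
  #|` fset_set (int_flows G a)|%fset.

Definition indeg (n : nat) (G : mgraph n) (r : 'I_(n.+2)) : nat :=
  count (fun e => e.2 == r) G.

Definition dvec (n : nat) (G : mgraph n) : 'I_(n.+2) -> int :=
  fun v =>
    if (v : nat) == 0%N then 0
    else if (v : nat) == n.+1 then
      - (\sum_(r : 'I_(n.+2) | (0 < r <= n)%N) ((indeg G r)%:Z - 1))
    else (indeg G v)%:Z - 1.

(* Reorder the edges of G0 so that (i,j) and (j,k) come first, with flows x
   and y.  If y <= x, sending the y units directly along (i,k) and leaving
   x - y on (i,j) gives a flow on G1 with the same demand d = d1.  If x < y,
   sending the x units along (i,k) and leaving y - x - 1 on (j,k) gives a
   flow on G2; the lost unit is exactly d2 - d (-1 at j, +1 at k).  Both maps
   are invertible, so K_G0(d) = K_G1(d1) + K_G2(d2).  The counts are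
   meaningful because all edges point upwards: cutting the vertex set at the
   head of an edge bounds the flow on it by the demands, so there are finitely
   many integer flows. *)

From HB Require Import structures.
From mathcomp Require Import all_boot all_order all_algebra.
From mathcomp Require Import finmap.
From mathcomp Require Import boolp classical_sets cardinality.
From mathcomp Require Import ring zify.

Set Implicit Arguments. Unset Strict Implicit. Unset Printing Implicit Defensive.
Import Order.TTheory GRing.Theory Num.Theory.
Local Open Scope classical_set_scope.
Local Open Scope ring_scope.
Local Open Scope card_scope.

(* No finiteness hypothesis: [fset_set] of an infinite set is empty. *)
Lemma card_eq_fset_set (T U : choiceType) (A : set T) (B : set U) :
  A #= B -> #|` fset_set A|%fset = #|` fset_set B|%fset.
Proof.
move=> AB; have [fA|nfA] := pselect (finite_set A).
  by apply/fcard_eq => //; rewrite -(eq_finite_set AB).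
have nfB : ~ finite_set B by rewrite -(eq_finite_set AB).
by rewrite /fset_set; do 2 case: pselect.
Qed.

Lemma inj_card_le_sub (T U : Type) (A : set T) (B : set U) (f : T -> U) :
  {in A &, injective f} -> f @` A `<=` B -> A #<= B.
Proof.
move=> /inj_card_eq /card_eqPle[_ AfA] fAB.
exact: card_le_trans AfA (subset_card_le fAB).
Qed.

Lemma can2_card_eq (T U : Type) (A : set T) (B : set U) (f : T -> U) (g : U -> T) :
  (forall x, A x -> B (f x)) -> (forall y, B y -> A (g y)) ->
  (forall x, A x -> g (f x) = x) -> (forall y, B y -> f (g y) = y) -> A #= B.
Proof.
move=> fAB gBA fK gK; rewrite card_eq_sym.
have -> : B = f @` A.
  by apply/seteqP; split=> [y By | _ [x Ax <-]]; [exists (g y); auto | auto].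
by apply: inj_card_eq => x y /set_mem Ax /set_mem Ay /(congr1 g); rewrite !fK.
Qed.

Lemma card_fset_setID (T : choiceType) (A P : set T) : finite_set A ->
  (#|` fset_set (A `&` P)|%fset + #|` fset_set (A `\` P)|%fset)%N = #|` fset_set A|%fset.
Proof.
move=> fA; have fAP : finite_set (A `&` P) by apply: finite_setIl.
have fAnP : finite_set (A `\` P) by apply: finite_setD.
apply/esym; rewrite -cardfsUI -fset_setU // -fset_setI // setDE -setIUr setUCr setIT.
by rewrite setICA -setIA setICr !setI0 fset_set0 cardfs0 addn0.
Qed.

Lemma sum_indicator (T : finType) (P : pred T) (c : T) :
  \sum_(v | P v) (c == v)%:Z = (P c)%:Z :> int.
Proof.
case Pc: (P c); last by rewrite big1 // => v Pv; case: eqP => // cv; rewrite cv Pv in Pc.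
by rewrite (bigD1 c) //= eqxx big1 ?addr0 // => v /andP[_ /negbTE]; rewrite eq_sym => ->.
Qed.

Section SeqFlows.
Variable n : nat.
Implicit Types (G : mgraph n) (s : seq nat) (a : 'I_n.+2 -> int).

Definition edge_flow (e : 'I_n.+2 * 'I_n.+2) (x : nat) (v : 'I_n.+2) : int :=
  x%:Z * ((e.1 == v)%:Z - (e.2 == v)%:Z).

Definition seq_netflow G s v : int := \sum_(p <- zip G s) edge_flow p.1 p.2 v.

(* Flows as lists aligned with the edge list: unlike [flow_vec G], this type
   does not depend on [G], so flows on reorderings of [G] can be compared. *)
Definition seq_flows G a : set (seq nat) :=
  [set s | size s = size G /\ forall v, seq_netflow G s v = a v].

Lemma netflowE G (f : flow_vec G) v :
  netflow f v = \sum_(e < size G) edge_flow (nth (v, v) G e) (f e) v.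
Proof.
rewrite /netflow !(big_mkcond (fun e : 'I_(size G) => _ == v)) -sumrB.
apply: eq_bigr => e _; rewrite /edge_flow.
by do 2 case: eqP => _; rewrite /= ?mulr0 ?mulr1 ?subr0 ?sub0r ?subrr ?mulrN1.
Qed.

Lemma seq_netflowE G s x0 v : size s = size G ->
  seq_netflow G s v = \sum_(e < size G) edge_flow (nth x0 G e) (nth 0%N s e) v.
Proof.
move=> sG; rewrite /seq_netflow (big_nth (x0, 0%N)) size_zip sG minnn big_mkord.
by apply: eq_bigr => e _; rewrite nth_zip.
Qed.

Lemma seq_netflow_cons e G x s v :
  seq_netflow (e :: G) (x :: s) v = edge_flow e x v + seq_netflow G s v.
Proof. by rewrite /seq_netflow big_cons. Qed.

Lemma int_flows_card_eq G a : int_flows G a #= seq_flows G a.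
Proof.
pose graph (f : flow_vec G) := [seq f e | e <- enum 'I_(size G)].
pose ungraph s : flow_vec G := [ffun e : 'I_(size G) => nth 0%N s e].
have nth_graph f (e : 'I_(size G)) : nth 0%N (graph f) e = f e.
  by rewrite (nth_map e) ?size_enum_ord // nth_ord_enum.
have size_graph f : size (graph f) = size G by rewrite size_map size_enum_ord.
apply: (can2_card_eq (f := graph) (g := ungraph)).
- move=> f fa; split=> // v; rewrite (seq_netflowE (v, v)) // -fa netflowE.
  by apply: eq_bigr => e _; rewrite nth_graph.
- move=> s [sG sa] v; rewrite netflowE -sa (seq_netflowE (v, v)) //.
  by apply: eq_bigr => e _; rewrite ffunE.
- by move=> f _; apply/ffunP => e; rewrite ffunE nth_graph.
- move=> s [sG _]; apply: (@eq_from_nth _ 0%N); rewrite size_graph // => q qG.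
  by rewrite (nth_graph _ (Ordinal qG)) ffunE.
Qed.

Lemma K_seq_flows G a : K G a = #|` fset_set (seq_flows G a)|%fset.
Proof. exact/card_eq_fset_set/int_flows_card_eq. Qed.

Lemma seq_flows_perm_le G G' a : perm_eq G' G -> seq_flows G a #<= seq_flows G' a.
Proof.
case/(perm_iotaP (ord0, ord0)) => Is IsP ->.
have Is_mem q : (q \in Is) = (q < size G)%N by rewrite (perm_mem IsP) mem_iota.
pose h s := [seq nth 0%N s q | q <- Is].
apply: (inj_card_le_sub (f := h)) =>
    [s t /set_mem[sG _] /set_mem[tG _] hst | _ [s [sG sa] <-]].
  apply: (@eq_from_nth _ 0%N) => [|q]; first by rewrite sG tG.
  rewrite sG -Is_mem => qIs; have := congr1 (nth 0%N ^~ (index q Is)) hst.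
  by rewrite /h !(nth_map 0%N) ?index_mem // nth_index.
split; first by rewrite !size_map.
move=> v; rewrite -sa /seq_netflow /h zip_map.
have -> : [seq (nth (ord0, ord0) G q, nth 0%N s q) | q <- Is] =
          [seq nth ((ord0, ord0), 0%N) (zip G s) q | q <- Is].
  by apply/eq_in_map => q qIs; rewrite nth_zip.
apply/perm_big/(perm_iotaP ((ord0, ord0), 0%N)); exists Is => //.
by rewrite size_zip sG minnn.
Qed.

Lemma K_perm G G' a : perm_eq G G' -> K G a = K G' a.
Proof.
move=> GG'; rewrite !K_seq_flows; apply/card_eq_fset_set/card_eqPle.
by split; apply: seq_flows_perm_le; rewrite // perm_sym.
Qed.


Lemma seq_netflow_cut G s (P : pred 'I_n.+2) : size s = size G ->
  \sum_(v | P v) seq_netflow G s v =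
  \sum_(e < size G) (nth 0%N s e)%:Z *
     ((P (nth (ord0, ord0) G e).1)%:Z - (P (nth (ord0, ord0) G e).2)%:Z).
Proof.
move=> sG; under eq_bigr do rewrite (seq_netflowE (ord0, ord0)) //.
rewrite exchange_big; apply: eq_bigr => e _.
by rewrite /edge_flow -mulr_sumr sumrB !sum_indicator.
Qed.

Lemma seq_flows_bound G a s q : (forall e, e \in G -> (e.1 < e.2)%N) ->
  seq_flows G a s -> (nth 0%N s q)%:Z <= \sum_v `|a v|.
Proof.
move=> G_up [sG sa]; have [qG|Gq] := ltnP q (size G); last first.
  by rewrite nth_default ?sG // sumr_ge0.
pose e q' := nth (ord0, ord0) G q'.
(* No edge leaves the up-set [P], and edge q enters it. *)
pose P := fun v : 'I_n.+2 => ((e q).2 <= v)%N.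
have cut_le0 (q' : 'I_(size G)) :
    (nth 0%N s q')%:Z * ((P (e q').1)%:Z - (P (e q').2)%:Z) <= 0.
  have /G_up lt_e := mem_nth (ord0, ord0) (ltn_ord q').
  rewrite /P; case: leqP => [le1|_].
    by rewrite (leq_trans le1 (ltnW lt_e)) subrr mulr0.
  by case: (_ <= _)%N; rewrite /= ?subrr ?mulr0 // sub0r mulrN1 oppr_le0.
have cut_q : (nth 0%N s q)%:Z * ((P (e q).1)%:Z - (P (e q).2)%:Z) = - (nth 0%N s q)%:Z.
  have /G_up lt_e := mem_nth (ord0, ord0) qG.
  by rewrite /P leqnn leqNgt lt_e sub0r mulrN1.
have : \sum_(v | P v) a v <= - (nth 0%N s q)%:Z.
  under eq_bigr do rewrite -sa; rewrite seq_netflow_cut // (bigD1 (Ordinal qG)) //=.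
  by rewrite cut_q -[leRHS]addr0 lerD2l sumr_le0.
rewrite -lerN2 opprK => /le_trans; apply.
rewrite (le_trans (ler_norm (- _))) // normrN (le_trans (ler_norm_sum _ _ _)) //.
by rewrite [leRHS](bigID P) lerDl sumr_ge0.
Qed.

Lemma seq_flows_finite G a : (forall e, e \in G -> (e.1 < e.2)%N) ->
  finite_set (seq_flows G a).
Proof.
move=> G_up; set B := absz (\sum_v `|a v|).
have s_le s q : seq_flows G a s -> (nth 0%N s q < B.+1)%N.
  by move=> /(seq_flows_bound q G_up); rewrite ltnS -lez_nat abszE ger0_norm // sumr_ge0.
pose F (g : {ffun 'I_(size G) -> 'I_B.+1}) := [seq val (g e) | e <- enum 'I_(size G)].
apply: (@sub_finite_set _ _ (range F)); last exact: finite_image.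
move=> s sa; exists [ffun e : 'I_(size G) => inord (nth 0%N s e)] => //.
have [sG _] := sa; apply: (@eq_from_nth _ 0%N) => [|q];
  rewrite size_map size_enum_ord // => qG.
by rewrite (nth_map (Ordinal qG)) ?size_enum_ord // ffunE /= inordK ?s_le ?nth_enum_ord.
Qed.

End SeqFlows.

Section DegreeVector.
Variable n : nat.
Implicit Types G : mgraph n.

Lemma eq_dvec G G' : (forall r, indeg G r = indeg G' r) -> dvec G = dvec G'.
Proof.
move=> GG'; apply/funext => v; rewrite /dvec GG'.
by under eq_bigr do rewrite GG'.
Qed.

Lemma dvec_perm G G' : perm_eq G G' -> dvec G = dvec G'.
Proof. by move=> /permP GG'; apply: eq_dvec => r; rewrite /indeg GG'. Qed.

Lemma dvec_shift G G' (j k : 'I_n.+2) v :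
  (forall r, indeg G' r + (j == r) = indeg G r + (k == r))%N ->
  (0 < j <= n)%N -> (0 < k)%N ->
  dvec G' v = dvec G v - (j == v)%:Z + (k == v)%:Z.
Proof.
move=> GG' /andP[j_gt0 j_le] k_gt0.
have shift r : (indeg G' r)%:Z - 1 = (indeg G r)%:Z - 1 - (j == r)%:Z + (k == r)%:Z.
  by have := GG' r; lia.
rewrite /dvec; case: eqP => [v0|_].
  have [-> ->] : (j == v) = false /\ (k == v) = false.
    by rewrite -!val_eqE /= v0 !eqn0Ngt j_gt0 k_gt0.
  by rewrite subr0 addr0.
case: eqP => [vn|_]; last by rewrite shift.
under eq_bigr do rewrite shift.
rewrite big_split /= sumrB !sum_indicator j_gt0 j_le /=.
have -> : (j == v) = false by apply/eqP => jv; move: j_le; rewrite jv vn ltnn.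
have -> : (k == v) = ~~ (k <= n)%N.
  rewrite -val_eqE /= vn; have := ltn_ord k; lia.
by rewrite k_gt0 /=; case: (k <= n)%N => /=; ring.
Qed.

End DegreeVector.

Section Shortcut.
Variables (n : nat) (i j k : 'I_n.+2) (H : mgraph n).

Local Notation G0 := [:: (i, j), (j, k) & H].
Local Notation G1 := [:: (i, k), (i, j) & H].
Local Notation G2 := [:: (i, k), (j, k) & H].
Local Notation jk_le_ij := [set s : seq nat | nth 0 s 1 <= nth 0 s 0]%N.

Lemma edge_flow_shortcut_jk x y v : (y <= x)%N ->
  edge_flow (i, k) y v + edge_flow (i, j) (x - y) v =
  edge_flow (i, j) x v + edge_flow (j, k) y v.
Proof. by move=> yx; rewrite /edge_flow /= -subzn //; ring. Qed.

Lemma edge_flow_shortcut_ij x y v : (x < y)%N ->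
  edge_flow (i, k) x v + edge_flow (j, k) (y - x).-1 v =
  edge_flow (i, j) x v + edge_flow (j, k) y v - (j == v)%:Z + (k == v)%:Z.
Proof.
move=> xy; rewrite /edge_flow /=.
have -> : ((y - x).-1)%:Z = y%:Z - x%:Z - 1 by lia.
by ring.
Qed.

Definition shortcut_jk (s : seq nat) :=
  if s is x :: y :: t then y :: (x - y)%N :: t else s.
Definition unshortcut_jk (s : seq nat) :=
  if s is y :: z :: t then (z + y)%N :: y :: t else s.
Definition shortcut_ij (s : seq nat) :=
  if s is x :: y :: t then x :: (y - x).-1 :: t else s.
Definition unshortcut_ij (s : seq nat) :=
  if s is x :: z :: t then x :: (z + x).+1 :: t else s.

Lemma seq_flows_shortcut_jk a : seq_flows G0 a `&` jk_le_ij #= seq_flows G1 a.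
Proof.
apply: (can2_card_eq (f := shortcut_jk) (g := unshortcut_jk)).
- case=> [|x [|y t]] [[//= tH sa] yx]; split=> // v.
  by rewrite -sa !seq_netflow_cons !addrA edge_flow_shortcut_jk.
- case=> [|y [|z t]] [//= tH sa]; split; last exact: leq_addl.
  split=> // v; rewrite -sa !seq_netflow_cons !addrA.
  by rewrite -edge_flow_shortcut_jk ?leq_addl // addnK.
- by case=> [|x [|y t]] [_ /= yx] //; rewrite subnK.
- by case=> [|y [|z t]] //=; rewrite addnK.
Qed.

Lemma seq_flows_shortcut_ij a :
  seq_flows G0 a `\` jk_le_ij
  #= seq_flows G2 (fun v => a v - (j == v)%:Z + (k == v)%:Z).
Proof.
apply: (can2_card_eq (f := shortcut_ij) (g := unshortcut_ij)).
- case=> [|x [|y t]] [[//= tH sa] /negP yx]; have xy : (x < y)%N by rewrite ltnNge.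
  split=> // v; rewrite -sa !seq_netflow_cons !addrA edge_flow_shortcut_ij //; ring.
- case=> [|x [|z t]] [//= tH sa]; split; last first.
    by apply/negP; rewrite -ltnNge ltnS leq_addl.
  split=> // v; have := sa v; rewrite !seq_netflow_cons !addrA.
  have := edge_flow_shortcut_ij (y := (z + x).+1) v (leq_addl z x : (x < (z + x).+1)%N).
  by rewrite subSn ?leq_addl // addnK /= => ->; lia.
- by case=> [|x [|y t]] [_ /= /negP yx] //; congr [:: _, _ & _]; lia.
- by case=> [|x [|z t]] //=; rewrite subSn ?leq_addl // addnK.
Qed.

Hypotheses (G0_up : forall e, e \in G0 -> (e.1 < e.2)%N).
Hypotheses (ij : (i < j)%N) (jk : (j < k)%N).

Lemma dvec_shortcut_jk : dvec G1 = dvec G0.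
Proof. by apply: eq_dvec => r; rewrite /indeg /= addnCA. Qed.

Lemma dvec_shortcut_ij : dvec G2 = fun v => dvec G0 v - (j == v)%:Z + (k == v)%:Z.
Proof.
apply/funext => v; apply: dvec_shift => [r||]; first by rewrite /indeg /=; lia.
  by have := ltn_ord k; lia.
lia.
Qed.

Lemma K_shortcut : K G0 (dvec G0) = (K G1 (dvec G1) + K G2 (dvec G2))%N.
Proof.
rewrite !K_seq_flows -(card_fset_setID jk_le_ij (seq_flows_finite _ G0_up)).
rewrite dvec_shortcut_jk dvec_shortcut_ij; congr addn; apply/card_eq_fset_set.
  exact: seq_flows_shortcut_jk.
exact: seq_flows_shortcut_ij.
Qed.

End Shortcut.

Theorem lemma3p3 (n : nat) (G0 : mgraph n) (i j k : 'I_(n.+2)) :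
  (forall e, e \in G0 -> (e.1 < e.2)%N) ->
  (i < j)%N -> (j < k)%N ->
  (i, j) \in G0 -> (j, k) \in G0 ->
  let G1 : mgraph n := (i, k) :: rem (j, k) G0 in
  let G2 : mgraph n := (i, k) :: rem (i, j) G0 in
  K G0 (dvec G0) = (K G1 (dvec G1) + K G2 (dvec G2))%N.
Proof.
move=> G0_up ij jk ijG jkG G1 G2.
set H := rem (i, j) (rem (j, k) G0).
have ij_neq_jk : (i, j) != (j, k) by apply/eqP => -[ij_eq _]; rewrite ij_eq ltnn in ij.
have ijG' : (i, j) \in rem (j, k) G0 by rewrite rem_mem.
have perm0 : perm_eq G0 [:: (i, j), (j, k) & H].
  apply: perm_trans (perm_to_rem jkG) _.
  rewrite perm_sym (perm_catCA [:: (i, j)] [:: (j, k)]) /= perm_cons perm_sym.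
  exact: perm_to_rem.
have perm1 : perm_eq G1 [:: (i, k), (i, j) & H] by rewrite perm_cons perm_to_rem.
have perm2 : perm_eq G2 [:: (i, k), (j, k) & H].
  by rewrite perm_cons -(perm_cons (i, j)) -(permPl (perm_to_rem ijG)).
rewrite (K_perm _ perm0) (K_perm _ perm1) (K_perm _ perm2).
rewrite (dvec_perm perm0) (dvec_perm perm1) (dvec_perm perm2).
by apply: K_shortcut => // e; rewrite -(perm_mem perm0); apply: G0_up.
Qed.
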